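(* Let $P$ be the program $l(X)\leftarrow p(X),r(X).\quad p(X)\leftarrow q(X,Y),p(Y).\quad r(f(X))\leftarrow s(Y),r(X).\quad q(f(Z),Z).\quad p(0).\quad r(0).\quad s(0).$ There is no linear norm $\|\cdot\|$ and linear level mapping $|\cdot|$ such that for all terms $X,Y$: $|\mathit{solve}(p(X))| > |\mathit{solve}((q(X,Y),p(Y)))|$, $|\mathit{solve}(r(f(X)))| > |\mathit{solve}((s(Y),r(X)))|$, and $|\mathit{solve}((s(Y),r(X)))| > |\mathit{solve}(r(X))|$, where $>$ is the usual order on natural numbers and $(\cdot,\cdot)$ is the binary functor $,/2$.
   Context: A norm maps terms to natural numbers and a level mapping maps atoms to natural numbers. A norm is linear if for every functor $f$ of arity $n$ (constants having arity $0$) $\|f(t_1,\dots,t_n)\|=c^f+\sum_{i=1}^n a^f_i\|t_i\|$, and a level mapping is linear if for every predicate $p$ of arity $n$ $|p(t_1,\dots,t_n)|=c^p+\sum_{i=1}^n a^p_i\|t_i\|$ for a linear norm $\|\cdot\|$, where all coefficients $c^f,a^f_i,c^p,a^p_i$ are non-negative integers. Here the atoms $\mathit{solve}(t)$ are atoms of a unary predicate $\mathit{solve}$ whose argument is a term built from the predicate symbols of $P$ (treated as functors) and the binary functor $,/2$. *)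

From Stdlib Require Import Arith.

(* Function symbols: those of the program P (f/1, 0/0), the predicate
   symbols of P treated as functors (l/1, p/1, q/2, r/1, s/1), and ,/2. *)
Inductive functor : Type := Ff | F0 | Fl | Fp | Fq | Fr | Fs | Fcomma.

Inductive term : Type :=
| Tf : term -> term
| T0 : term
| Tl : term -> term
| Tp : term -> term
| Tq : term -> term -> term
| Tr : term -> term
| Ts : term -> term
| Tcomma : term -> term -> term.

(* Terms of the object language of P: built from f/1 and 0/0 only. *)
Fixpoint obj_term (t : term) : Prop :=
  match t with
  | Tf u => obj_term u
  | T0 => True
  | _ => False
  end.

(* A linear norm: for each functor g a constant c^g and coefficients a^g_i
   (i = 0 .. arity-1, zero-based), all natural numbers. *)
Record lin_norm : Type := LinNorm {
  nc : functor -> nat;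
  na : functor -> nat -> nat
}.

Fixpoint norm (N : lin_norm) (t : term) : nat :=
  match t with
  | Tf u => nc N Ff + na N Ff 0 * norm N u
  | T0 => nc N F0
  | Tl u => nc N Fl + na N Fl 0 * norm N u
  | Tp u => nc N Fp + na N Fp 0 * norm N u
  | Tq u v => nc N Fq + na N Fq 0 * norm N u + na N Fq 1 * norm N v
  | Tr u => nc N Fr + na N Fr 0 * norm N u
  | Ts u => nc N Fs + na N Fs 0 * norm N u
  | Tcomma u v => nc N Fcomma + na N Fcomma 0 * norm N u + na N Fcomma 1 * norm N v
  end.

Record lin_level : Type := LinLevel {
  lc : nat;
  la : nat
}.

Definition level_solve (N : lin_norm) (L : lin_level) (t : term) : nat :=
  lc L + la L * norm N t.

From Stdlib Require Import Arith Lia.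

(* A linear level mapping on [solve] is monotone in the norm, so the three
   decreases are decreases of norms.  The first one, [p(X) > (q(X,Y),p(Y))]
   with [Y = X], forces the coefficient of the second argument of [,/2] to
   vanish; then [(s(Y),r(X))] has a norm independent of [X], and the second
   and third decreases, taken at [X = 0] and [X = f(0)], give
   [||r(f(0))|| > ||(s(0),r(0))|| = ||(s(0),r(f(0)))|| > ||r(f(0))||]. *)

Lemma level_solve_lt_norm (N : lin_norm) (L : lin_level) (t u : term) :
  level_solve N L u < level_solve N L t -> norm N u < norm N t.
Proof.
  unfold level_solve; intros Hlt.
  destruct (Nat.lt_ge_cases (norm N u) (norm N t)) as [Hnorm | Hnorm]; [exact Hnorm |].
  apply (Nat.mul_le_mono_l _ _ (la L)) in Hnorm.
  lia.
Qed.

Lemma norm_comma_ge_right (N : lin_norm) (u v : term) :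
  0 < na N Fcomma 1 -> norm N v <= norm N (Tcomma u v).
Proof. simpl; nia. Qed.

Lemma norm_comma_indep_right (N : lin_norm) (u v w : term) :
  na N Fcomma 1 = 0 -> norm N (Tcomma u v) = norm N (Tcomma u w).
Proof. intros Hc; simpl; rewrite Hc; lia. Qed.

Theorem mainTheorem4 :
  ~ exists (N : lin_norm) (L : lin_level),
      forall X Y : term, obj_term X -> obj_term Y ->
        level_solve N L (Tp X) > level_solve N L (Tcomma (Tq X Y) (Tp Y)) /\
        level_solve N L (Tr (Tf X)) > level_solve N L (Tcomma (Ts Y) (Tr X)) /\
        level_solve N L (Tcomma (Ts Y) (Tr X)) > level_solve N L (Tr X).
Proof.
  intros [N [L H]].
  destruct (H T0 T0 I I) as [Hp [Hr _]].
  destruct (H (Tf T0) T0 I I) as [_ [_ Hs]].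
  apply level_solve_lt_norm in Hp, Hr, Hs.
  assert (Hcomma : na N Fcomma 1 = 0).
  { destruct (Nat.eq_0_gt_0_cases (na N Fcomma 1)) as [Hc | Hc]; [exact Hc |].
    pose proof (norm_comma_ge_right N (Tq T0 T0) (Tp T0) Hc).
    lia. }
  rewrite (norm_comma_indep_right N (Ts T0) (Tr T0) (Tr (Tf T0)) Hcomma) in Hr.
  lia.
Qed.
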